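(* Let $X$ be a $T_0$ space. Then $\mathcal{O}(\mathcal{GSI}_2(X))=\mathcal{O}_{SI_2}(X)$; that is, a subset $U\subseteq X$ is $SI_2$-open if and only if whenever a net $(x_i)_{i\in I}$ in $X$ $GSI_2$-converges to some $x\in U$, then $x_i\in U$ eventually.
   Context: For a $T_0$ space $X$, the specialization order is $x\le y$ iff $x\in \mathrm{cl}\{y\}$; all order notions refer to it. For $A\subseteq X$, $\uparrow A=\{x: a\le x \text{ for some } a\in A\}$, $\uparrow x=\uparrow\{x\}$; $A^{\uparrow}$ is the set of upper bounds of $A$, $A^{\downarrow}$ the set of lower bounds, and $A^\delta=(A^\uparrow)^\downarrow$. A nonempty $A\subseteq X$ is irreducible if whenever $A\subseteq F_1\cup F_2$ with $F_1,F_2$ closed, then $A\subseteq F_1$ or $A\subseteq F_2$; $\mathrm{Irr}(X)$ is the set of irreducible subsets. $X^{(<\omega)}$ is the set of nonempty finite subsets of $X$. $P_S(X)$ is the set $Q(X)$ of nonempty compact saturated (upper) subsets of $X$ with the upper Vietoris topology, whose basis is $\{\square U: U\text{ open}\}$, $\square U=\{Q\in Q(X): Q\subseteq U\}$. A net is eventually in $U$ if from some index on all its terms lie in $U$. A subset $U\subseteq X$ is $SI_2$-open if $U$ is open in $X$ and for every $F\in\mathrm{Irr}(X)$, $F^\delta\cap U\ne\emptyset$ implies $F\cap U\neq\emptyset$; these form the topology $\mathcal{O}_{SI_2}(X)$. A net $(x_i)_{i\in I}$ $GSI_2$-converges to $x$ if there exists $\mathcal F\subseteq X^{(<\omega)}$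 with $\{\uparrow F:F\in\mathcal F\}$ irreducible in $P_S(X)$ such that (i) for every open $U$, if $\uparrow F\subseteq U$ for some $F\in\mathcal F$ then $x_i\in U$ eventually, and (ii) $\bigcap_{F\in\mathcal F}\uparrow F\subseteq\uparrow x$. $\mathcal{O}(\mathcal{GSI}_2(X))$ denotes the set of all $U\subseteq X$ such that whenever a net $GSI_2$-converges to a point of $U$, it is eventually in $U$. *)

From HB Require Import structures.
From mathcomp Require Import all_boot all_order.
From mathcomp Require Import all_classical all_reals all_analysis.
Set Implicit Arguments. Unset Strict Implicit. Unset Printing Implicit Defensive.
Local Open Scope classical_set_scope.

Section GSI2.
Variable X : topologicalType.

Definition spec_le (x y : X) : Prop := closure [set y] x.

Definition upset (A : set X) : set X := [set x | exists2 a, A a & spec_le a x].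
Definition upper_bounds (A : set X) : set X := [set y | forall a, A a -> spec_le a y].
Definition lower_bounds (A : set X) : set X := [set y | forall a, A a -> spec_le y a].
Definition delta (A : set X) : set X := lower_bounds (upper_bounds A).

Definition irreducible (A : set X) : Prop :=
  A !=set0 /\ forall F1 F2 : set X, closed F1 -> closed F2 ->
    A `<=` F1 `|` F2 -> A `<=` F1 \/ A `<=` F2.

Definition SI2_open (U : set X) : Prop :=
  open U /\ forall F : set X, irreducible F -> delta F `&` U !=set0 -> F `&` U !=set0.

Definition saturated (A : set X) : Prop := forall a x, A a -> spec_le a x -> A x.
Definition QX : set (set X) := [set K | [/\ K !=set0, compact K & saturated K]].

(* upper Vietoris topology on Q(X), generated by the basis {box U : U open} *)
Definition box (U : set X) : set (set X) := [set K | QX K /\ K `<=` U].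
Definition PS_open (W : set (set X)) : Prop :=
  W `<=` QX /\ forall K, W K -> exists U : set X, [/\ open U, K `<=` U & box U `<=` W].
Definition PS_closed (C : set (set X)) : Prop := C `<=` QX /\ PS_open (QX `\` C).

Definition PS_irreducible (A : set (set X)) : Prop :=
  A `<=` QX /\ A !=set0 /\ forall C1 C2, PS_closed C1 -> PS_closed C2 ->
    A `<=` C1 `|` C2 -> A `<=` C1 \/ A `<=` C2.

Definition directed (I : Type) (r : I -> I -> Prop) : Prop :=
  [/\ (exists i : I, True), (forall i, r i i),
      (forall i j k, r i j -> r j k -> r i k) &
      (forall i j, exists k, r i k /\ r j k)].

Definition eventually_in (I : Type) (r : I -> I -> Prop) (x : I -> X) (U : set X) : Prop :=
  exists i0, forall i, r i0 i -> U (x i).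

Definition GSI2_converges (I : Type) (r : I -> I -> Prop) (x : I -> X) (y : X) : Prop :=
  exists FF : set (set X),
    [/\ (forall F, FF F -> finite_set F /\ F !=set0),
        PS_irreducible (upset @` FF),
        (forall U : set X, open U -> (exists2 F, FF F & upset F `<=` U) ->
            eventually_in r x U) &
        \bigcap_(F in FF) upset F `<=` upset [set y]].

Definition GSI2_open (U : set X) : Prop :=
  forall (I : Type) (r : I -> I -> Prop), directed r ->
    forall (x : I -> X) (y : X), GSI2_converges r x y -> U y -> eventually_in r x U.

End GSI2.

From HB Require Import structures.
From mathcomp Require Import all_boot all_order.
From mathcomp Require Import all_classical all_reals all_analysis.
Set Implicit Arguments. Unset Strict Implicit.
Local Open Scope classical_set_scope.

(* GSI2-open => SI2-open: for an irreducible F and y in F^delta, the net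
   (V, a) |-> a, over open sets V meeting F and points a in V, ordered by
   reverse inclusion of V, GSI2-converges to y with witness family
   {{a} : a in F}.  So a GSI2-open U containing y contains an open set meeting
   F; F = {y} gives openness of U.
   SI2-open => GSI2-open: if no upF (F in the witness family FF) lies in U,
   then X \ U meets every member of FF; these members being finite, Zorn's
   lemma yields a minimal closed M inside X \ U meeting them all.
   Irreducibility of {upF : F in FF} in P_S(X) makes M irreducible, and
   condition (ii) puts y in M^delta, contradicting SI2-openness of U. *)

Section Specialization.
Context {X : topologicalType}.
Implicit Types (x y a b : X) (A C V W : set X).

Lemma spec_refl x : spec_le x x.
Proof. exact: subset_closure. Qed.

Lemma open_spec_le V a b : open V -> V a -> spec_le a b -> V b.
Proof.
move=> oV Va ab; have nV : nbhs a V by apply: open_nbhs_nbhs.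
by have [c [-> Vc]] := ab V nV.
Qed.

Lemma closed_spec_le C a b : closed C -> C b -> spec_le a b -> C a.
Proof. by move=> cC Cb ab; rewrite (closure_id C).1 //; apply: closureS ab => z ->. Qed.

Lemma spec_trans x y b : spec_le x y -> spec_le y b -> spec_le x b.
Proof. by move=> xy yb; exact: closed_spec_le (@closed_closure _ [set b]) yb xy. Qed.

Lemma subset_upset A : A `<=` upset A.
Proof. by move=> a Aa; exists a => //; exact: spec_refl. Qed.

Lemma upset1_subset V y : open V -> V y -> upset [set y] `<=` V.
Proof. by move=> oV Vy z [_ -> yz]; exact: open_spec_le oV Vy yz. Qed.

Lemma closed_meets_upset C (F : set X) :
  closed C -> upset F `&` C !=set0 -> F `&` C !=set0.
Proof.
by move=> cC [b [[a Fa ab] Cb]]; exists a; split => //; exact: closed_spec_le Cb ab.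
Qed.

(* y is a cluster point of every filter on upy: open sets are upward closed. *)
Lemma QX_upset1 y : QX (upset [set y]).
Proof.
split; first by exists y; exact: subset_upset.
- move=> G PG Gy; exists y; split; first exact: subset_upset.
  move=> A B GA; rewrite nbhsE => -[V [oV Vy] VB].
  have [a [Aa ya]] := filter_ex (filterI GA Gy).
  by exists a; split => //; apply/VB; exact: upset1_subset oV Vy _ ya.
- by move=> a z [_ -> ya] az; exists y => //; exact: spec_trans az.
Qed.

Lemma delta_set1 y : delta [set y] y.
Proof. by move=> u /(_ y erefl). Qed.

Lemma irreducible_set1 y : irreducible [set y].
Proof.
split; first by exists y.
by move=> C1 C2 _ _ /(_ y erefl) [] Cy; [left|right] => _ ->.
Qed.

Lemma irreducible_openI (F : set X) V W : irreducible F -> open V -> open W ->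
  V `&` F !=set0 -> W `&` F !=set0 -> V `&` W `&` F !=set0.
Proof.
move=> [_ irrF] oV oW [a [Va Fa]] [b [Wb Fb]]; apply: contrapT => nVWF.
have : F `<=` ~` V `|` ~` W.
  move=> c Fc; apply: contrapT => /not_orP [/contrapT Vc /contrapT Wc].
  by apply: nVWF; exists c.
by case/(irrF _ _ (open_closedC oV) (open_closedC oW)) => FC;
  [exact: FC a Fa Va | exact: FC b Fb Wb].
Qed.

Lemma closed_upset1_preimage (C : set (set X)) :
  PS_closed C -> closed [set a | C (upset [set a])].
Proof.
move=> [_ [_ oQC]]; rewrite -openC openE => a nCa; rewrite /interior nbhsE.
have [V [oV aV VQC]] := oQC (upset [set a]) (conj (QX_upset1 a) nCa).
exists V; first by split => //; apply/aV/subset_upset.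
move=> b Vb; have /VQC [] // : box V (upset [set b]).
by split; [exact: QX_upset1 | exact: upset1_subset].
Qed.

Lemma PS_irreducible_upset1 (F : set X) :
  irreducible F -> PS_irreducible (@upset X @` [set [set a] | a in F]).
Proof.
move=> [[a0 Fa0] irrF]; split; last split.
- by move=> _ [_ [a _ <-] <-]; exact: QX_upset1.
- by exists (upset [set a0]); exists [set a0] => //; exists a0.
move=> C1 C2 cC1 cC2 sub.
have : F `<=` [set a | C1 (upset [set a])] `|` [set a | C2 (upset [set a])].
  by move=> a Fa; apply: sub; exists [set a] => //; exists a.
by case/(irrF _ _ (closed_upset1_preimage cC1) (closed_upset1_preimage cC2)) => FC;
  [left|right] => _ [_ [a Fa <-] <-]; exact: FC.
Qed.

Lemma PS_closed_meets C : closed C -> PS_closed [set K | QX K /\ K `&` C !=set0].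
Proof.
move=> cC; split; first by move=> K [].
split; first by move=> K [].
move=> K [QK nKC]; exists (~` C); split; first exact: closed_openC.
- by move=> b Kb Cb; apply: nKC; split => //; exists b.
- by move=> K' [QK' K'C]; split => // -[_ [b [K'b Cb]]]; exact: K'C b K'b Cb.
Qed.

End Specialization.

Section ApproximatingNet.
Context {X : topologicalType} (F : set X).
Hypothesis irrF : irreducible F.

Definition approx_index :=
  {p : set X * X | [/\ open p.1, p.1 `&` F !=set0 & p.1 p.2]}.
Definition approx_le (i j : approx_index) := (sval j).1 `<=` (sval i).1.
Definition approx_net (i : approx_index) := (sval i).2.

Lemma approx_directed : directed approx_le.
Proof.
have [a0 Fa0] := irrF.1.
have iT : [/\ open [set: X], [set: X] `&` F !=set0 & [set: X] a0].
  by split; [exact: openT | exists a0 | ].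
split; first by exists (exist _ (setT, a0) iT).
- by move=> ?.
- by move=> i j k ij jk z /jk /ij.
move=> [[V a] iVa] [[W b] iWb]; have [oV VF _] := iVa; have [oW WF _] := iWb.
have [c [[Vc Wc] Fc]] := irreducible_openI irrF oV oW VF WF.
have ic : [/\ open (V `&` W), V `&` W `&` F !=set0 & (V `&` W) c].
  by split; [exact: openI | exists c | ].
by exists (exist _ (V `&` W, c) ic); split => z [].
Qed.

Lemma approx_net_cvg y : delta F y -> GSI2_converges approx_le approx_net y.
Proof.
move=> dFy; exists [set [set a] | a in F]; split.
- by move=> _ [a _ <-]; split; [exact: finite_set1 | exists a].
- exact: PS_irreducible_upset1.
- move=> V oV [_ [a Fa <-] aV].
  have Va : V a by apply/aV/subset_upset.
  have ia : [/\ open V, V `&` F !=set0 & V a] by split => //; exists a.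
  exists (exist _ (V, a) ia) => -[[W b] ib] WV.
  by have [_ _ Wb] := ib; exact: WV b Wb.
- move=> u Fu; exists y => //; apply: dFy => a Fa.
  by have [_ ->] := Fu _ (ex_intro2 _ _ a Fa erefl).
Qed.

Lemma GSI2_open_meets (U : set X) y : GSI2_open U -> delta F y -> U y ->
  exists V, [/\ open V, V `<=` U & V `&` F !=set0].
Proof.
move=> oU dFy Uy.
have [[[V a] /= [oV VF Va]] evU] :=
  oU _ _ approx_directed _ _ (approx_net_cvg dFy) Uy.
exists V; split => // b Vb.
have ib : [/\ open V, V `&` F !=set0 & V b] by [].
exact: (evU (exist _ (V, b) ib)).
Qed.

End ApproximatingNet.

Lemma GSI2_open_SI2_open {X : topologicalType} (U : set X) :
  GSI2_open U -> SI2_open U.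
Proof.
move=> oU; split.
- rewrite openE => y Uy; rewrite /interior nbhsE.
  have [V [oV VU [z [Vz zy]]]] :=
    GSI2_open_meets (irreducible_set1 y) oU (delta_set1 (y:=y)) Uy.
  by rewrite zy in Vz; exists V.
- move=> F irrF [y [dFy Uy]].
  have [V [_ VU [a [Va Fa]]]] := GSI2_open_meets irrF oU dFy Uy.
  by exists a; split => //; exact: VU.
Qed.

Lemma chain_avoids_seq (T : eqType) (D : set (set T)) (s : seq T) :
  D !=set0 -> total_on D subset ->
  (forall a, a \in s -> exists2 d, D d & ~ d a) ->
  exists2 d, D d & forall a, a \in s -> ~ d a.
Proof.
move=> [d0 Dd0] chainD; elim: s => [|a s IH] avoid; first by exists d0.
have [d1 Dd1 d1s] := IH (fun b bs => avoid b (@mem_behead _ (a :: s) b bs)).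
have [d2 Dd2 d2a] := avoid a (mem_head a s).
have [d12|d21] := chainD d1 d2 Dd1 Dd2.
- by exists d1 => // b; rewrite in_cons => /predU1P [-> /d12 | /d1s].
- by exists d2 => // b; rewrite in_cons => /predU1P [-> // | bs /d21]; exact: d1s.
Qed.

Lemma finite_setI_bigcap_chain (T : eqType) (F : set T) (D : set (set T)) :
  finite_set F -> D !=set0 -> total_on D subset ->
  (forall d, D d -> F `&` d !=set0) -> F `&` \bigcap_(d in D) d !=set0.
Proof.
move=> /finite_seqP [S ->] D0 chainD meetD; apply: contrapT => nSD.
have avoid a : a \in S -> exists2 d, D d & ~ d a.
  move=> aS; apply: contrapT => nd; apply: nSD; exists a; split => // d Dd.
  by apply: contrapT => nda; apply: nd; exists d.
have [d Dd dS] := chain_avoids_seq D0 chainD avoid.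
by have [a [aS da]] := meetD d Dd; exact: dS a aS da.
Qed.

Section MinimalClosed.
Context {X : topologicalType} (FF : set (set X)).

Definition meets_each (C : set X) := forall F, FF F -> F `&` C !=set0.

Definition minimal_meeting (M : set X) := [/\ closed M, meets_each M &
  forall C, closed C -> C `<=` M -> meets_each C -> M `<=` C].

Lemma meets_eachS (C1 C2 : set X) : C1 `<=` C2 -> meets_each C1 -> meets_each C2.
Proof. by move=> C12 m1 F /m1 [a [Fa /C12 C2a]]; exists a. Qed.

Lemma exists_minimal_meeting (C : set X) : (forall F, FF F -> finite_set F) ->
  closed C -> meets_each C -> exists2 M, M `<=` C & minimal_meeting M.
Proof.
move=> FFfin cC mC.
(* Zorn on open complements: M := C `\` B is minimal when B is maximal. *)
pose P := [set B : set X | open B /\ meets_each (C `\` B)].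
have [B [[oB mCB] Bmax]] : exists B, P B /\ forall B', B `<` B' -> ~ P B'.
  apply: Zorn_bigcup => D DP chainD; split.
    by apply: bigcup_open => B /DP [].
  move=> F FF_F; case: (pselect (D !=set0)) => [[B0 DB0]|D0]; last first.
    have [a [Fa Ca]] := mC F FF_F; exists a; split => //; split => // -[B DB _].
    by apply: D0; exists B.
  have : F `&` \bigcap_(d in [set C `\` B | B in D]) d !=set0.
    apply: finite_setI_bigcap_chain; first exact: FFfin.
    - by exists (C `\` B0); exists B0.
    - move=> _ _ [B DB <-] [B' DB' <-].
      by case: (chainD B B' DB DB') => BB'; [right|left] => z [Cz nBz];
        split => // /BB'.
    - by move=> _ [B DB <-]; exact: (DP B DB).2.
  move=> [a [Fa Da]]; exists a; split => //.
  split; first by have [] := Da _ (ex_intro2 _ _ B0 DB0 erefl).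
  by move=> [B DB Ba]; have [] := Da _ (ex_intro2 _ _ B DB erefl).
exists (C `\` B) => //; split => //; first exact: closedI cC (open_closedC oB).
move=> C' cC' C'M mC'.
have PB' : P (B `|` ~` C').
  split; first exact: openU oB (closed_openC cC').
  by apply: meets_eachS mC' => z C'z; have [Cz nBz] := C'M z C'z; split => // -[|].
have B'B : B `|` ~` C' `<=` B.
  by apply: contrapT => nB'B; apply: Bmax PB'; split => // z Bz; left.
move=> z [_ nBz]; apply: contrapT => nC'z.
by apply: nBz; apply: B'B; right.
Qed.

Lemma minimal_meeting_irreducible (M : set X) :
  PS_irreducible (@upset X @` FF) -> minimal_meeting M -> irreducible M.
Proof.
move=> [FFQ [[_ [F0 FF0 _]] irrFF]] [cM mM minM]; split.
  by have [a [_ Ma]] := mM F0 FF0; exists a.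
move=> C1 C2 cC1 cC2 MC.
have cover : @upset X @` FF `<=` [set K | QX K /\ K `&` (M `&` C1) !=set0]
                     `|` [set K | QX K /\ K `&` (M `&` C2) !=set0].
  move=> _ [F FF_F <-]; have [a [Fa Ma]] := mM F FF_F.
  have QF : QX (upset F) by apply: FFQ; exists F.
  by case: (MC a Ma) => Ca; [left|right]; split => //; exists a;
    split => //; exact: subset_upset.
have shrink (C : set X) : closed C ->
    @upset X @` FF `<=` [set K | QX K /\ K `&` (M `&` C) !=set0] -> M `<=` C.
  move=> cC sub z /(minM (M `&` C)) [] //; first exact: closedI.
  move=> F FF_F; apply: closed_meets_upset (closedI cM cC) _.
  by have [] := sub _ (ex_intro2 _ _ F FF_F erefl).
case: (irrFF _ _ (PS_closed_meets (closedI cM cC1))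
                 (PS_closed_meets (closedI cM cC2)) cover) => sub.
- by left; exact: shrink cC1 sub.
- by right; exact: shrink cC2 sub.
Qed.

Lemma meets_each_delta (M : set X) y : meets_each M ->
  \bigcap_(F in FF) upset F `<=` upset [set y] -> delta M y.
Proof.
move=> mM FFy u uM.
have : (\bigcap_(F in FF) upset F) u.
  by move=> F FF_F; have [a [Fa Ma]] := mM F FF_F; exists a => //; exact: uM.
by case/FFy => _ ->.
Qed.

End MinimalClosed.

Lemma SI2_open_GSI2_open {X : topologicalType} (U : set X) :
  SI2_open U -> GSI2_open U.
Proof.
move=> [oU SI2U] I r _ x y [FF [FFfin irrFF cvgFF limFF]] Uy.
suff [F FF_F FU] : exists2 F, FF F & upset F `<=` U.
  exact: cvgFF U oU (ex_intro2 _ _ F FF_F FU).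
apply: contrapT => noF.
have cU : closed (~` U) by exact: open_closedC.
have mU : meets_each FF (~` U).
  move=> F FF_F; apply: closed_meets_upset cU _; apply: contrapT => nF.
  by apply: noF; exists F => // b Fb; apply: contrapT => nUb; apply: nF; exists b.
have [M MU minM] := exists_minimal_meeting (fun F FF_F => (FFfin F FF_F).1) cU mU.
have [_ mM _] := minM.
have [z [Mz Uz]] := SI2U M (minimal_meeting_irreducible irrFF minM)
  (ex_intro _ y (conj (meets_each_delta mM limFF) Uy)).
exact: MU z Mz Uz.
Qed.

Theorem theorem3p7 (X : topologicalType) (T0 : @kolmogorov_space X) (U : set X) :
  GSI2_open U <-> SI2_open U.
Proof. by split; [exact: GSI2_open_SI2_open | exact: SI2_open_GSI2_open]. Qed.
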